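(* Let $G$ be a group and $n$ a positive integer. If $x \in \gamma_j(G)$ and $y \in \gamma_j(G)^4\gamma_{j+1}(G)$ for some $1 \leq j \leq n$, then $(xy)^{4^{n-j}} \equiv x^{4^{n-j}} \pmod{N_{n+1,j}(G)}$.
   Context: $\gamma_1(G) = G$, $\gamma_{i+1}(G) = [\gamma_i(G), G]$. For a subgroup $H$ and integer $m$, $H^m$ is the subgroup generated by all $m$-th powers. For $1 \le k \le n$, $N_{n,k}(G) = \gamma_k(G)^{4^{n-k}}\gamma_{k+1}(G)^{4^{n-k-1}} \cdots \gamma_n(G)$. *)

From Stdlib Require Import Arith.

Record group := Group {
  gcar :> Type;
  gmul : gcar -> gcar -> gcar;
  gone : gcar;
  ginv : gcar -> gcar;
  gmulA : forall a b c, gmul a (gmul b c) = gmul (gmul a b) c;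
  gmul1l : forall a, gmul gone a = a;
  gmulVl : forall a, gmul (ginv a) a = gone
}.

Section GroupDefs.
Variable G : group.

Inductive gen (S : G -> Prop) : G -> Prop :=
| gen_in : forall x, S x -> gen S x
| gen_one : gen S (gone G)
| gen_mul : forall x y, gen S x -> gen S y -> gen S (gmul G x y)
| gen_inv : forall x, gen S x -> gen S (ginv G x).

Definition comm (a b : G) : G :=
  gmul G (gmul G (ginv G a) (ginv G b)) (gmul G a b).

Fixpoint gpow (x : G) (n : nat) : G :=
  match n with
  | 0 => gone G
  | S m => gmul G (gpow x m) x
  end.

(* Lower central series: gamma 1 = G, gamma (i+1) = [gamma i, G].
   (gamma 0 is also set to G; it is never used.) *)
Fixpoint gamma (i : nat) : G -> Prop :=
  match i with
  | 0 => fun _ => True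
  | 1 => fun _ => True
  | S i' => gen (fun z => exists a b, gamma i' a /\ z = comm a b)
  end.

Definition powsub (H : G -> Prop) (m : nat) : G -> Prop :=
  gen (fun z => exists h, H h /\ z = gpow h m).

(* Product HK (taken as the subgroup generated by the product set;
   for the normal subgroups considered here it is the product set itself). *)
Definition prodsub (H K : G -> Prop) : G -> Prop :=
  gen (fun z => exists h k, H h /\ K k /\ z = gmul G h k).

(* Naux k d = gamma_k^{4^d} gamma_{k+1}^{4^{d-1}} ... gamma_{k+d}. *)
Fixpoint Naux (k d : nat) : G -> Prop :=
  match d with
  | 0 => gamma k
  | S d' => prodsub (powsub (gamma k) (4 ^ d)) (Naux (S k) d')
  end.

Definition Nnk (n k : nat) : G -> Prop := Naux k (n - k).

Definition congr_mod (N : G -> Prop) (a b : G) : Prop := N (gmul G (ginv G b) a).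

End GroupDefs.

(* Write d(b, z) := b^-4 (b z)^4, so that (b z)^4 = b^4 d(b, z).  Fixing k and writing
   M_d := Naux k d = gamma_k^(4^d) gamma_(k+1)^(4^(d-1)) ... gamma_(k+d), the heart of the proof is that
   d(b, z) lies in M_(d+1) whenever z lies in M_d.  Since d satisfies the cocycle
   rule d(b, z z') = d(b, z) d(b z, z'), it suffices to check this on generators of M_d.
   For z in gamma_k one has (b z)^4 = b^4 z^(b^3) z^(b^2) z^b z, hence d(b, z) = z^4 modulo
   gamma_(k+1).  For the generators g^(4^d) of M_d with g in gamma_k, the identity
   [a^4, h] = d(a, [a, h]) shows by induction that [g^(4^d), h] lies in M_d taken from k+1,
   which plays the role of gamma_(k+1) in the same computation.  Applied to b = x^(4^i) and
   z = x^(-4^i) (x y)^(4^i), this gives the theorem by induction on n - j. *)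
From Stdlib Require Import Arith Lia.

Section GroupTheory.

Variable G : group.

Declare Scope group_scope.
Local Open Scope group_scope.
Local Notation "x * y" := (gmul G x y) : group_scope.
Local Notation "x ^-1" := (ginv G x) (at level 3, left associativity, format "x ^-1") : group_scope.
Local Notation "1" := (gone G) : group_scope.
Local Notation "x ^+ n" := (gpow G x n) (at level 29, left associativity) : group_scope.

Lemma mulgV (a : G) : a * a^-1 = 1.
Proof.
  assert (Hidem : (a * a^-1) * (a * a^-1) = a * a^-1).
  { rewrite <- gmulA, (gmulA G (a^-1) a), gmulVl, gmul1l. reflexivity. }
  rewrite <- (gmul1l G (a * a^-1)), <- (gmulVl G (a * a^-1)) at 1.
  rewrite <- gmulA, Hidem. apply gmulVl.
Qed.

Lemma mulg1 (a : G) : a * 1 = a.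
Proof. rewrite <- (gmulVl G a), gmulA, mulgV, gmul1l. reflexivity. Qed.

Lemma mulKg (a x : G) : a^-1 * (a * x) = x.
Proof. rewrite gmulA, gmulVl, gmul1l. reflexivity. Qed.

Lemma mulKVg (a x : G) : a * (a^-1 * x) = x.
Proof. rewrite gmulA, mulgV, gmul1l. reflexivity. Qed.

Lemma mulg_eq1_inv (a c : G) : a * c = 1 -> c = a^-1.
Proof. intro Hac. rewrite <- (mulg1 (a^-1)), <- Hac, mulKg. reflexivity. Qed.

Lemma invgK (a : G) : a^-1^-1 = a.
Proof. symmetry. apply mulg_eq1_inv, gmulVl. Qed.

Lemma invMg (a b : G) : (a * b)^-1 = b^-1 * a^-1.
Proof. symmetry. apply mulg_eq1_inv. rewrite <- gmulA, mulKVg. apply mulgV. Qed.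

Lemma invg1 : 1^-1 = 1.
Proof. symmetry. apply mulg_eq1_inv, gmul1l. Qed.

Ltac gsimpl := repeat progress rewrite ?invMg, ?invgK, ?invg1, <- ?gmulA, ?gmul1l,
  ?mulg1, ?mulKg, ?mulKVg, ?mulgV, ?gmulVl.

Lemma gpowD (x : G) (a b : nat) : x ^+ (a + b)%nat = x ^+ a * x ^+ b.
Proof.
  induction b as [|b IHb]; simpl.
  - rewrite Nat.add_0_r, mulg1. reflexivity.
  - rewrite Nat.add_succ_r. simpl. rewrite IHb, gmulA. reflexivity.
Qed.

Lemma gpowM (x : G) (a b : nat) : x ^+ (a * b)%nat = x ^+ a ^+ b.
Proof.
  induction b as [|b IHb]; simpl.
  - rewrite Nat.mul_0_r. reflexivity.
  - rewrite Nat.mul_succ_r, gpowD, IHb. reflexivity.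
Qed.

Lemma gpow_pow4S (x : G) (d : nat) : x ^+ (4 ^ S d)%nat = x ^+ (4 ^ d)%nat ^+ 4.
Proof. rewrite <- gpowM. f_equal. simpl. lia. Qed.

Definition conjg (a g : G) : G := g^-1 * a * g.

Lemma conjMg (a b g : G) : conjg (a * b) g = conjg a g * conjg b g.
Proof. unfold conjg. gsimpl. reflexivity. Qed.

Lemma conjVg (a g : G) : conjg (a^-1) g = (conjg a g)^-1.
Proof. unfold conjg. gsimpl. reflexivity. Qed.

Lemma conj1g (g : G) : conjg 1 g = 1.
Proof. unfold conjg. gsimpl. reflexivity. Qed.

Lemma conjXg (a g : G) (m : nat) : conjg (a ^+ m) g = conjg a g ^+ m.
Proof.
  induction m as [|m IHm]; simpl.
  - apply conj1g.
  - rewrite conjMg, IHm. reflexivity.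
Qed.

Lemma conjRg (a b g : G) : conjg (comm G a b) g = comm G (conjg a g) (conjg b g).
Proof. unfold comm. rewrite !conjMg, !conjVg. reflexivity. Qed.

Definition subgroup (P : G -> Prop) : Prop :=
  P 1 /\ (forall a b, P a -> P b -> P (a * b)) /\ (forall a, P a -> P (a^-1)).

Definition normal (P : G -> Prop) : Prop := forall a g, P a -> P (conjg a g).

Lemma gen_subgroup (S : G -> Prop) : subgroup (gen G S).
Proof. split; [|split]; intros; [apply gen_one | apply gen_mul | apply gen_inv]; auto. Qed.

Lemma gen_normal (S : G -> Prop) :
  (forall s g, S s -> S (conjg s g)) -> normal (gen G S).
Proof.
  intros HS a g Ha. induction Ha.
  - apply gen_in; auto.
  - rewrite conj1g. apply gen_one.
  - rewrite conjMg. apply gen_mul; auto.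
  - rewrite conjVg. apply gen_inv; auto.
Qed.

Lemma gamma_subgroup (i : nat) : subgroup (gamma G i).
Proof.
  destruct i as [|[|i]]; [split; [|split]; simpl; auto .. |].
  apply gen_subgroup.
Qed.

Lemma gamma_normal (i : nat) : normal (gamma G i).
Proof.
  induction i as [|[|i] IHi]; [intros ? ? ?; simpl; auto .. |].
  apply gen_normal. intros s g [a [b [Ha ->]]].
  exists (conjg a g), (conjg b g). split; [apply IHi; auto | apply conjRg].
Qed.

Lemma gamma_comm (k : nat) (z h : G) : gamma G k z -> gamma G (S k) (comm G z h).
Proof.
  destruct k as [|k]; intros Hz; [simpl; auto |].
  apply gen_in. eauto.
Qed.

Lemma powsub_pow (H : G -> Prop) (m : nat) (h : G) : H h -> powsub G H m (h ^+ m).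
Proof. intro Hh. apply gen_in. eauto. Qed.

Lemma powsub_normal (H : G -> Prop) (m : nat) : normal H -> normal (powsub G H m).
Proof.
  intros HN. apply gen_normal. intros s g [h [Hh ->]].
  exists (conjg h g). split; [auto | apply conjXg].
Qed.

Lemma prodsub_mul (H K : G -> Prop) (h k : G) : H h -> K k -> prodsub G H K (h * k).
Proof. intros Hh Hk. apply gen_in. eauto. Qed.

Lemma prodsub_normal (H K : G -> Prop) : normal H -> normal K -> normal (prodsub G H K).
Proof.
  intros HH HK. apply gen_normal. intros s g [h [k [Hh [Hk ->]]]].
  exists (conjg h g), (conjg k g). repeat split; auto. apply conjMg.
Qed.

Lemma Naux_subgroup (k d : nat) : subgroup (Naux G k d).
Proof. destruct d; [apply gamma_subgroup | apply gen_subgroup]. Qed.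

Lemma Naux_normal (d k : nat) : normal (Naux G k d).
Proof.
  revert k. induction d as [|d IHd]; intro k.
  - apply gamma_normal.
  - apply prodsub_normal; [apply powsub_normal, gamma_normal | apply IHd].
Qed.

Lemma Naux_prodsub (k d : nat) (z : G) : Naux G (S k) d z -> Naux G k (S d) z.
Proof.
  intro Hz. rewrite <- (gmul1l G z). apply prodsub_mul; [apply gen_one | exact Hz].
Qed.

Definition delta4 (b z : G) : G := (b ^+ 4)^-1 * (b * z) ^+ 4.

Lemma delta4_1 (b : G) : delta4 b 1 = 1.
Proof. unfold delta4. cbn [gpow]. gsimpl. reflexivity. Qed.

Lemma delta4M (b x y : G) : delta4 b (x * y) = delta4 b x * delta4 (b * x) y.
Proof. unfold delta4. cbn [gpow]. gsimpl. reflexivity. Qed.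

Lemma delta4V (b x : G) : delta4 b (x^-1) = (delta4 (b * x^-1) x)^-1.
Proof. unfold delta4. cbn [gpow]. gsimpl. reflexivity. Qed.

Lemma comm_pow4 (a h : G) : comm G (a ^+ 4) h = delta4 a (comm G a h).
Proof. unfold delta4, comm. cbn [gpow]. gsimpl. reflexivity. Qed.

Lemma delta4_gen (S P : G -> Prop) : subgroup P ->
  (forall b s, S s -> P (delta4 b s)) -> forall z, gen G S z -> forall b, P (delta4 b z).
Proof.
  intros [P1 [PM PV]] HS z Hz. induction Hz; intro b; auto.
  - rewrite delta4_1. auto.
  - rewrite delta4M. auto.
  - rewrite delta4V. auto.
Qed.

Lemma delta4_congr_pow4 (N : G -> Prop) (b z : G) : subgroup N -> normal N ->
  (forall h, N (comm G z h)) -> N ((z ^+ 4)^-1 * delta4 b z).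
Proof.
  intros [_ [NM _]] HN Hcomm.
  set (E := fun a a' => N (a^-1 * a')).
  assert (EM : forall a a' c c', E a a' -> E c c' -> E (a * c) (a' * c')).
  { unfold E; intros a a' c c' Ha Hc.
    replace ((a * c)^-1 * (a' * c')) with (conjg (a^-1 * a') c * (c^-1 * c'))
      by (unfold conjg; gsimpl; reflexivity).
    apply NM; auto. }
  assert (Econj : forall g, E z (conjg z g)).
  { intro g. unfold E. replace (z^-1 * conjg z g) with (comm G z g)
      by (unfold comm, conjg; gsimpl; reflexivity). auto. }
  assert (Eexpand : delta4 b z =
      conjg z (b ^+ 3) * conjg z (b ^+ 2) * conjg z b * conjg z 1).
  { unfold delta4, conjg. cbn [gpow]. gsimpl. reflexivity. }
  assert (Hpow : z ^+ 4 = z * z * z * z) by (cbn [gpow]; rewrite gmul1l; reflexivity).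
  change (E (z ^+ 4) (delta4 b z)). rewrite Eexpand, Hpow.
  repeat apply EM; auto.
Qed.

Lemma delta4_prodsub (P N : G -> Prop) (b s : G) : subgroup N -> normal N ->
  (forall h, N (comm G s h)) -> P (s ^+ 4) -> prodsub G P N (delta4 b s).
Proof.
  intros HNsub HN Hcomm Hs.
  replace (delta4 b s) with (s ^+ 4 * ((s ^+ 4)^-1 * delta4 b s)) by (gsimpl; reflexivity).
  apply prodsub_mul; [exact Hs | apply delta4_congr_pow4; auto].
Qed.

Definition comm_pow_Naux (d : nat) : Prop :=
  forall i (g h : G), gamma G i g -> Naux G (S i) d (comm G (g ^+ (4 ^ d)%nat) h).

Definition delta4_Naux (d : nat) : Prop :=
  forall k (b z : G), Naux G k d z -> Naux G k (S d) (delta4 b z).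

Lemma comm_pow_Naux0 : comm_pow_Naux 0.
Proof.
  intros i g h Hg. cbn [Nat.pow gpow]. rewrite gmul1l. apply gamma_comm, Hg.
Qed.

Lemma delta4_Naux0 : delta4_Naux 0.
Proof.
  intros k b z Hz. apply delta4_prodsub; [apply gamma_subgroup | apply gamma_normal | |].
  - intro h. apply gamma_comm, Hz.
  - apply powsub_pow, Hz.
Qed.

Lemma comm_pow_NauxS (d : nat) :
  comm_pow_Naux d -> delta4_Naux d -> comm_pow_Naux (S d).
Proof.
  intros Hcomm Hdelta i g h Hg.
  rewrite gpow_pow4S, comm_pow4. apply Hdelta, Hcomm, Hg.
Qed.

Lemma delta4_NauxS (d : nat) :
  comm_pow_Naux (S d) -> delta4_Naux d -> delta4_Naux (S d).
Proof.
  intros Hcomm Hdelta k b z Hz. revert b.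
  eapply (delta4_gen _ _ (gen_subgroup _)); [| exact Hz].
  intros b _ [h [z' [Hh [Hz' ->]]]]. rewrite delta4M.
  apply gen_mul; [| apply Naux_prodsub, Hdelta, Hz'].
  revert b. eapply (delta4_gen _ _ (gen_subgroup _)); [| exact Hh].
  intros b _ [g [Hg ->]].
  apply (delta4_prodsub _ (Naux G (S k) (S d))); [apply Naux_subgroup | apply Naux_normal | |].
  - intro h'. apply Hcomm, Hg.
  - rewrite <- gpow_pow4S. apply powsub_pow, Hg.
Qed.

Lemma delta4_Naux_all (d : nat) : delta4_Naux d.
Proof.
  enough (Hboth : comm_pow_Naux d /\ delta4_Naux d) by apply Hboth.
  induction d as [|d [Hcomm Hdelta]].
  - split; [apply comm_pow_Naux0 | apply delta4_Naux0].
  - assert (HcommS := comm_pow_NauxS d Hcomm Hdelta).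
    split; [exact HcommS | apply delta4_NauxS; assumption].
Qed.

Lemma congr_pow4_Naux (k d : nat) (u v : G) :
  congr_mod G (Naux G k d) v u -> congr_mod G (Naux G k (S d)) (v ^+ 4) (u ^+ 4).
Proof.
  unfold congr_mod. intro Huv.
  replace v with (u * (u^-1 * v)) by (gsimpl; reflexivity).
  apply delta4_Naux_all, Huv.
Qed.

Lemma congr_pow_pow4_Naux (j m : nat) (x y : G) : Naux G j 1 y ->
  congr_mod G (Naux G j (S m)) ((x * y) ^+ (4 ^ m)%nat) (x ^+ (4 ^ m)%nat).
Proof.
  intro Hy. induction m as [|m IHm].
  - unfold congr_mod. simpl. gsimpl. exact Hy.
  - rewrite !gpow_pow4S. apply congr_pow4_Naux, IHm.
Qed.

End GroupTheory.

Theorem mainTheorem11 (G : group) (n j : nat) (x y : G) :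
  1 <= n -> 1 <= j -> j <= n ->
  gamma G j x ->
  prodsub G (powsub G (gamma G j) 4) (gamma G (S j)) y ->
  congr_mod G (Nnk G (S n) j)
    (gpow G (gmul G x y) (4 ^ (n - j)))
    (gpow G x (4 ^ (n - j))).
Proof.
  intros _ _ Hjn _ Hy. unfold Nnk.
  replace (S n - j) with (S (n - j)) by lia.
  apply congr_pow_pow4_Naux, Hy.
Qed.
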